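(* Let $X=\ell_p$ for some $1\le p<\infty$, or $X=c_0$, considered as a Banach algebra under coordinatewise multiplication, and let $\lambda\in\mathbb C$ with $|\lambda|>1$. Let $\lambda B(x(1),x(2),\ldots)=(\lambda x(2),\lambda x(3),\ldots)$. Then $\lambda B$ does not have any frequently hypercyclic algebra. Furthermore, no hypercyclic algebra for $\lambda B$ can contain a frequently hypercyclic vector.
   Context: For an operator $T$ on $X$, a vector $x$ is hypercyclic if its orbit $\{T^nx:n\ge0\}$ is dense; it is frequently hypercyclic if for every non-empty open $U\subset X$ the set $\{n\in\mathbb N_0:T^nx\in U\}$ has positive lower density (lower density of $A\subset\mathbb N_0$: $\liminf_{N\to\infty}\frac{\mathrm{card}(A\cap[0,N])}{N+1}$). A hypercyclic (resp. frequently hypercyclic) algebra for $T$ is a subalgebra $\mathcal A\neq\{0\}$ of $X$ such that every non-zero element of $\mathcal A$ is a hypercyclic (resp. frequently hypercyclic) vector for $T$. *)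

From Stdlib Require Import Reals ClassicalEpsilon.
From Coquelicot Require Import Coquelicot.
Open Scope R_scope.

Definition seqC := nat -> C.

(** a^q for a >= 0 and q > 0, with the convention 0^q = 0. *)
Definition powR (a q : R) : R :=
  if Rle_dec a 0 then 0 else Rpower a q.

Inductive space := Lp (p : R) | C0.

Definition valid_space (s : space) : Prop :=
  match s with Lp p => 1 <= p | C0 => True end.

Definition inX (s : space) (x : seqC) : Prop :=
  match s with
  | Lp p => ex_series (fun n => powR (Cmod (x n)) p)
  | C0 => is_lim_seq (fun n => Cmod (x n)) 0
  end.

Definition normX (s : space) (x : seqC) : R :=
  match s with
  | Lp p => powR (Series (fun n => powR (Cmod (x n)) p)) (1 / p)
  | C0 => real (Lub_Rbar (fun r => exists n, r = Cmod (x n)))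
  end.

Definition seq_add (x y : seqC) : seqC := fun n => Cplus (x n) (y n).
Definition seq_sub (x y : seqC) : seqC := fun n => Cminus (x n) (y n).
Definition seq_scal (a : C) (x : seqC) : seqC := fun n => Cmult a (x n).
Definition seq_mul (x y : seqC) : seqC := fun n => Cmult (x n) (y n).
Definition seq0 : seqC := fun _ => RtoC 0.

Definition openX (s : space) (U : seqC -> Prop) : Prop :=
  (forall x, U x -> inX s x) /\
  (forall x, U x -> exists eps, 0 < eps /\
     forall y, inX s y -> normX s (seq_sub y x) < eps -> U y).

Definition lamB (l : C) (x : seqC) : seqC := fun n => Cmult l (x (S n)).

Definition orbit (T : seqC -> seqC) (x : seqC) (n : nat) : seqC :=
  Nat.iter n T x.

Definition ind (P : Prop) : nat :=
  if excluded_middle_informative P then 1%nat else 0%nat.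

Fixpoint cnt (A : nat -> Prop) (N : nat) : nat :=
  match N with
  | O => ind (A O)
  | S M => (cnt A M + ind (A (S M)))%nat
  end.

Definition lower_density (A : nat -> Prop) : Rbar :=
  LimInf_seq (fun N => INR (cnt A N) / INR (S N)).

Definition pos_lower_density (A : nat -> Prop) : Prop :=
  Rbar_lt 0 (lower_density A).

Definition hypercyclic (s : space) (T : seqC -> seqC) (x : seqC) : Prop :=
  inX s x /\
  forall U, openX s U -> (exists u, U u) -> exists n, U (orbit T x n).

Definition freq_hypercyclic (s : space) (T : seqC -> seqC) (x : seqC) : Prop :=
  inX s x /\
  forall U, openX s U -> (exists u, U u) ->
    pos_lower_density (fun n => U (orbit T x n)).

(** (Complex, not necessarily unital) subalgebras of X for the
    coordinatewise product. *)
Definition subalgebra (s : space) (A : seqC -> Prop) : Prop :=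
  (forall x, A x -> inX s x) /\
  A seq0 /\
  (forall x y, A x -> A y -> A (seq_add x y)) /\
  (forall a x, A x -> A (seq_scal a x)) /\
  (forall x y, A x -> A y -> A (seq_mul x y)).

Definition hc_algebra (s : space) (T : seqC -> seqC) (A : seqC -> Prop) : Prop :=
  subalgebra s A /\ (exists a, A a /\ a <> seq0) /\
  forall a, A a -> a <> seq0 -> hypercyclic s T a.

Definition fhc_algebra (s : space) (T : seqC -> seqC) (A : seqC -> Prop) : Prop :=
  subalgebra s A /\ (exists a, A a /\ a <> seq0) /\
  forall a, A a -> a <> seq0 -> freq_hypercyclic s T a.

(* If [x] is frequently hypercyclic for [lB], the times [n] at which
   [(lB)^n x] lies in the unit polydisc have positive lower density, so they
   have gaps of at most linear size: every [m] has such an [n <= m] with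
   [m < q (n+1)] for a fixed [q].  Since [|l|^n |x(m)| < 1] at these times,
   [|l|^m |x(m)|^q] stays bounded.  But [x^q] lies in every algebra containing
   [x] and is non-zero, and a hypercyclic vector [y] for [lB] must make
   [|l|^m |y(m)|] (the first coordinate of [(lB)^m y]) unbounded. *)

From Pilot Require Import Defs.
From Stdlib Require Import Reals Lia Lra ClassicalEpsilon.
From Coquelicot Require Import Coquelicot.
Open Scope R_scope.

Lemma powR_ge0 a q : 0 <= powR a q.
Proof. unfold powR. destruct (Rle_dec a 0); [lra | left; apply exp_pos]. Qed.

Lemma powR_Rpower a q : 0 < a -> powR a q = Rpower a q.
Proof. intros Ha. unfold powR. destruct (Rle_dec a 0); [lra | reflexivity]. Qed.

Lemma powR_le a b q : 0 <= q -> a <= b -> powR a q <= powR b q.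
Proof.
  intros Hq Hab. destruct (Rle_or_lt a 0) as [Ha | Ha].
  - unfold powR at 1. destruct (Rle_dec a 0); [apply powR_ge0 | lra].
  - rewrite !powR_Rpower by lra. apply Rle_Rpower_l; lra.
Qed.

Lemma powR_invK a q : 0 <= a -> 0 < q -> powR (powR a q) (1 / q) = a.
Proof.
  intros Ha Hq. destruct Ha as [Ha | <-].
  - assert (Haq : 0 < Rpower a q) by apply exp_pos.
    rewrite (powR_Rpower a), powR_Rpower, Rpower_mult by assumption.
    replace (q * (1 / q)) with 1 by (field; lra).
    apply Rpower_1; assumption.
  - unfold powR. destruct (Rle_dec 0 0); [| lra].
    destruct (Rle_dec 0 0); [reflexivity | lra].
Qed.

Lemma Cmod_sub_le (a b : C) : Cmod (Cminus a b) <= Cmod a + Cmod b.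
Proof. rewrite <- (Cmod_opp b). apply Cmod_triangle. Qed.

Lemma Cmod_sub_ge (a b : C) : Rabs (Cmod a - Cmod b) <= Cmod (Cminus a b).
Proof. rewrite !Cmod_norm. exact (norm_triangle_inv (K := R_AbsRing) a b). Qed.

Lemma powR_Cmod_sub_le (a b : C) q : 0 <= q ->
  powR (Cmod (Cminus a b)) q <= Rpower 2 q * (powR (Cmod a) q + powR (Cmod b) q).
Proof.
  intros Hq. set (M := Rmax (Cmod a) (Cmod b)).
  assert (HM : Cmod (Cminus a b) <= 2 * M).
  { pose proof (Cmod_sub_le a b). pose proof (Rmax_l (Cmod a) (Cmod b)).
    pose proof (Rmax_r (Cmod a) (Cmod b)). unfold M; lra. }
  assert (H2q : 0 < Rpower 2 q) by apply exp_pos.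
  assert (HMq : powR M q <= powR (Cmod a) q + powR (Cmod b) q).
  { pose proof (powR_ge0 (Cmod a) q). pose proof (powR_ge0 (Cmod b) q).
    unfold M; destruct (Rle_or_lt (Cmod a) (Cmod b)).
    - rewrite Rmax_right by assumption; lra.
    - rewrite Rmax_left by lra; lra. }
  apply Rle_trans with (powR (2 * M) q); [apply powR_le; assumption |].
  destruct (Rle_or_lt M 0) as [HM0 | HM0].
  - unfold powR at 1. destruct (Rle_dec (2 * M) 0); [| lra].
    apply Rmult_le_pos; [lra |]. pose proof (powR_ge0 (Cmod a) q).
    pose proof (powR_ge0 (Cmod b) q). lra.
  - rewrite (powR_Rpower (2 * M)), <- Rpower_mult_distr, <- (powR_Rpower M) by lra.
    apply Rmult_le_compat_l; lra.
Qed.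

Lemma finite_argmax (u : nat -> R) N :
  exists m, (m <= N)%nat /\ forall n, (n <= N)%nat -> u n <= u m.
Proof.
  induction N as [| N [m [HmN Hm]]].
  - exists O. split; [lia |]. intros n Hn. replace n with O by lia. lra.
  - destruct (Rle_or_lt (u m) (u (S N))) as [Hle | Hlt].
    + exists (S N). split; [lia |]. intros n Hn.
      destruct (Nat.eq_dec n (S N)) as [-> | Hne]; [lra |].
      specialize (Hm n ltac:(lia)). lra.
    + exists m. split; [lia |]. intros n Hn.
      destruct (Nat.eq_dec n (S N)) as [-> | Hne]; [lra |].
      apply Hm; lia.
Qed.

Lemma term_le_Series (f : nat -> R) k :
  (forall n, 0 <= f n) -> ex_series f -> f k <= Series f.
Proof.
  intros Hf Hex.
  apply (is_lim_seq_le_loc (fun _ => f k) (sum_n f) (f k) (Series f));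
    [| apply is_lim_seq_const | exact (Series_correct _ Hex)].
  exists k. intros n Hn. rewrite sum_n_Reals.
  induction Hn as [| n Hn IH]; simpl.
  - destruct k as [| k]; simpl; [lra |].
    pose proof (cond_pos_sum f k Hf). lra.
  - pose proof (Hf (S n)). lra.
Qed.

Lemma inX_coord_eventually_lt s x : valid_space s -> inX s x ->
  forall eps, 0 < eps -> exists N, forall k, (N <= k)%nat -> Cmod (x k) < eps.
Proof.
  intros Hv Hx eps Heps. destruct s as [p |]; simpl in Hv, Hx.
  - apply ex_series_lim_0, is_lim_seq_spec in Hx.
    assert (Hp : 0 < Rpower eps p) by apply exp_pos.
    destruct (Hx (mkposreal _ Hp)) as [N HN]. exists N. intros k Hk.
    specialize (HN k Hk). simpl in HN.
    rewrite Rminus_0_r, Rabs_pos_eq in HN by apply powR_ge0.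
    destruct (Rlt_or_le (Cmod (x k)) eps) as [Hlt | Hge]; [assumption |].
    pose proof (powR_le eps (Cmod (x k)) p ltac:(lra) Hge).
    rewrite (powR_Rpower eps) in H by assumption. lra.
  - apply is_lim_seq_spec in Hx. destruct (Hx (mkposreal _ Heps)) as [N HN].
    exists N. intros k Hk. specialize (HN k Hk). simpl in HN.
    rewrite Rminus_0_r, Rabs_pos_eq in HN by apply Cmod_ge_0. assumption.
Qed.

Lemma inX_coord_le_Rmax s x eps : valid_space s -> inX s x -> 0 < eps ->
  exists m, forall k, Cmod (x k) <= Rmax (Cmod (x m)) eps.
Proof.
  intros Hv Hx Heps. destruct (inX_coord_eventually_lt s x Hv Hx eps Heps) as [N HN].
  destruct (finite_argmax (fun k => Cmod (x k)) N) as [m [_ Hm]].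
  exists m. intros k. destruct (Compare_dec.le_lt_dec N k) as [Hk | Hk].
  - specialize (HN k Hk). pose proof (Rmax_r (Cmod (x m)) eps). lra.
  - specialize (Hm k ltac:(lia)). pose proof (Rmax_l (Cmod (x m)) eps). lra.
Qed.

Lemma coord_le_normX s x : valid_space s -> inX s x ->
  forall k, Cmod (x k) <= normX s x.
Proof.
  intros Hv Hx k. destruct s as [p |]; simpl in Hv, Hx |- *.
  - rewrite <- (powR_invK (Cmod (x k)) p) by (apply Cmod_ge_0 || lra).
    apply powR_le; [unfold Rdiv; rewrite Rmult_1_l; left; apply Rinv_0_lt_compat; lra |].
    apply (term_le_Series (fun n => powR (Cmod (x n)) p));
      [intros; apply powR_ge0 | assumption].
  - destruct (inX_coord_le_Rmax C0 x 1 I Hx Rlt_0_1) as [m HM].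
    destruct (Lub_Rbar_correct (fun r => exists n, r = Cmod (x n))) as [Hub Hlub].
    pose proof (Hub (Cmod (x k)) (ex_intro _ k eq_refl)) as Hk.
    assert (HM' : Rbar_le (Lub_Rbar (fun r => exists n, r = Cmod (x n)))
                          (Rmax (Cmod (x m)) 1)).
    { apply Hlub. intros r [n ->]. apply HM. }
    destruct (Lub_Rbar (fun r => exists n, r = Cmod (x n))); simpl in *; tauto.
Qed.

Lemma inX_sub s x y : valid_space s -> inX s x -> inX s y -> inX s (seq_sub x y).
Proof.
  intros Hv Hx Hy. destruct s as [p |]; simpl in Hv, Hx, Hy |- *.
  - apply (ex_series_le (V := R_CompleteNormedModule) _
      (fun n => Rpower 2 p * (powR (Cmod (x n)) p + powR (Cmod (y n)) p))).
    + intros n. change (norm ?r) with (Rabs r).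
      rewrite Rabs_pos_eq by apply powR_ge0. apply powR_Cmod_sub_le; lra.
    + apply (ex_series_scal (V := R_NormedModule)), (ex_series_plus (V := R_NormedModule));
        assumption.
  - apply (is_lim_seq_le_le (fun _ => 0) _ (fun n => Cmod (x n) + Cmod (y n))).
    + intros n. split; [apply Cmod_ge_0 | apply Cmod_sub_le].
    + apply is_lim_seq_const.
    + replace (Finite 0) with (Finite (0 + 0)) by (f_equal; ring).
      apply is_lim_seq_plus'; assumption.
Qed.

Definition seq_delta0 (c : C) : seqC :=
  fun j => match j with O => c | S _ => RtoC 0 end.

Lemma inX_seq_delta0 s c : inX s (seq_delta0 c).
Proof.
  destruct s as [p |]; simpl.
  - apply ex_series_incr_1. simpl. rewrite Cmod_0.
    apply (ex_series_le (V := R_CompleteNormedModule) _ (fun n => (1 / 2) ^ n)).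
    + intros n. change (norm ?r) with (Rabs r). unfold powR.
      destruct (Rle_dec 0 0); [| lra]. rewrite Rabs_R0. apply pow_le; lra.
    + apply ex_series_geom. rewrite Rabs_pos_eq; lra.
  - apply is_lim_seq_incr_1. simpl. rewrite Cmod_0. apply is_lim_seq_const.
Qed.

Definition unit_polydisc s : seqC -> Prop :=
  fun y => inX s y /\ forall k, Cmod (y k) < 1.

Definition first_coord_gt s L : seqC -> Prop :=
  fun y => inX s y /\ L < Cmod (y O).

Lemma openX_unit_polydisc s : valid_space s -> openX s (unit_polydisc s).
Proof.
  intros Hv. split; [intros x [Hx _]; exact Hx |].
  intros y [Hy Hy1].
  destruct (inX_coord_le_Rmax s y (1 / 2) Hv Hy) as [m HyM]; [lra |].
  set (M := Rmax (Cmod (y m)) (1 / 2)) in HyM.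
  assert (HM1 : M < 1) by (unfold M; apply Rmax_case; [apply Hy1 | lra]).
  exists (1 - M). split; [lra |]. intros z Hz Hzy. split; [exact Hz |]. intros k.
  pose proof (coord_le_normX s _ Hv (inX_sub s z y Hv Hz Hy) k) as Hk.
  pose proof (Cmod_sub_ge (z k) (y k)) as Htri. apply Rabs_le_between in Htri.
  specialize (HyM k). change (seq_sub z y k) with (Cminus (z k) (y k)) in Hk. lra.
Qed.

Lemma openX_first_coord_gt s L : valid_space s -> openX s (first_coord_gt s L).
Proof.
  intros Hv. split; [intros x [Hx _]; exact Hx |].
  intros y [Hy Hy0]. exists (Cmod (y O) - L). split; [lra |].
  intros z Hz Hzy. split; [exact Hz |].
  pose proof (coord_le_normX s _ Hv (inX_sub s z y Hv Hz Hy) O) as H0.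
  pose proof (Cmod_sub_ge (z O) (y O)) as Htri. apply Rabs_le_between in Htri.
  change (seq_sub z y O) with (Cminus (z O) (y O)) in H0. lra.
Qed.

Lemma cnt_le_S E N : (cnt E N <= S N)%nat.
Proof.
  induction N as [| N IH]; simpl; unfold Defs.ind;
    repeat destruct excluded_middle_informative; lia.
Qed.

Lemma cnt_bound E N b :
  (forall n, (n <= N)%nat -> E n -> (n < b)%nat) -> (cnt E N <= b)%nat.
Proof.
  induction N as [| N IH]; intros HE; simpl; unfold Defs.ind at 1.
  - destruct excluded_middle_informative as [h | h]; [specialize (HE O (le_n _) h) |]; lia.
  - destruct excluded_middle_informative as [h | h].
    + specialize (HE (S N) (le_n _) h). pose proof (cnt_le_S E N). lia.
    + rewrite Nat.add_0_r. apply IH. intros n Hn. apply HE. lia.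
Qed.

Lemma pos_lower_density_lb E : pos_lower_density E ->
  exists d, 0 < d /\ exists N0, forall N, (N0 <= N)%nat ->
    d < INR (cnt E N) / INR (S N).
Proof.
  unfold pos_lower_density, lower_density.
  set (u := fun N => INR (cnt E N) / INR (S N)).
  destruct (ex_LimInf_seq u) as [l Hl]. rewrite (is_LimInf_seq_unique _ _ Hl).
  intros Hpos. destruct l as [l | |]; simpl in Hpos, Hl; try contradiction.
  - assert (Hl2 : 0 < l / 2) by lra.
    destruct (Hl (mkposreal _ Hl2)) as [_ [N0 HN0]]. exists (l / 2). split; [lra |].
    exists N0. intros N HN. specialize (HN0 N HN).
    unfold u in HN0; cbn [pos] in HN0. lra.
  - destruct (Hl (1 / 2)) as [N0 HN0]. exists (1 / 2). split; [lra |]. exists N0; exact HN0.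
Qed.

(* Otherwise every [n <= N] in [E] has [(n+1) q <= N], so [E] meets [[0,N]] in
   at most [N/q] points, which contradicts density [> d] once [q d > 1]. *)
Lemma pos_lower_density_linear_gaps E : pos_lower_density E ->
  exists q N0, (0 < q)%nat /\ forall N, (N0 <= N)%nat ->
    exists n, E n /\ (n <= N)%nat /\ (N < (n + 1) * q)%nat.
Proof.
  intros HE. destruct (pos_lower_density_lb E HE) as [d [Hd [N0 HN0]]].
  destruct (INR_archimed d 1 Hd) as [q Hq].
  assert (Hq0 : (0 < q)%nat) by (destruct q; simpl in Hq; [lra | lia]).
  exists q, N0. split; [exact Hq0 |]. intros N HN. specialize (HN0 N HN).
  apply Classical_Prop.NNPP. intros Hgap.
  assert (Hcnt : (q * cnt E N <= N)%nat).
  { assert (cnt E N <= N / q)%nat.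
    { apply cnt_bound. intros n Hn Hn'.
      apply Nat.div_le_lower_bound; [lia |].
      destruct (Compare_dec.le_lt_dec ((n + 1) * q) N); [lia |].
      exfalso. apply Hgap. exists n. auto. }
    pose proof (Nat.Div0.mul_div_le N q). nia. }
  apply le_INR in Hcnt. rewrite mult_INR in Hcnt.
  assert (HSN : 0 < INR (S N)) by (apply lt_0_INR; lia).
  apply (Rmult_lt_compat_r (INR (S N))) in HN0; [| exact HSN].
  unfold Rdiv in HN0. rewrite Rmult_assoc, Rinv_l, S_INR in HN0 by lra.
  rewrite S_INR in HSN. pose proof (pos_INR q). pose proof (pos_INR N).
  nra.
Qed.

Lemma freq_hypercyclic_hypercyclic s T x :
  freq_hypercyclic s T x -> hypercyclic s T x.
Proof.
  intros [Hx H]. split; [exact Hx |]. intros U HU Hne.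
  destruct (pos_lower_density_linear_gaps _ (H U HU Hne)) as [q [N0 [_ HN0]]].
  destruct (HN0 N0 (le_n _)) as [n [Hn _]]. exists n; exact Hn.
Qed.

Lemma Cmod_orbit_lamB l x n j :
  Cmod (orbit (lamB l) x n j) = Cmod l ^ n * Cmod (x (n + j)%nat).
Proof.
  revert j. induction n as [| n IH]; intros j.
  - simpl. ring.
  - change (orbit (lamB l) x (S n) j) with (Cmult l (orbit (lamB l) x n (S j))).
    rewrite Cmod_mult, IH, Nat.add_succ_r, Nat.add_succ_l. simpl pow. ring.
Qed.

Lemma hypercyclic_lamB_unbounded s l x : valid_space s ->
  hypercyclic s (lamB l) x -> forall M, exists m, M < Cmod l ^ m * Cmod (x m).
Proof.
  intros Hv [_ Hx] M.
  assert (Hne : exists u, first_coord_gt s M u).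
  { exists (seq_delta0 (RtoC (Rabs M + 1))). split; [apply inX_seq_delta0 |].
    simpl. rewrite Cmod_R, Rabs_pos_eq; pose proof (Rabs_pos M);
      pose proof (Rle_abs M); lra. }
  destruct (Hx _ (openX_first_coord_gt s M Hv) Hne) as [m [_ Hm]].
  exists m. rewrite Cmod_orbit_lamB, Nat.add_0_r in Hm. exact Hm.
Qed.

Lemma pow_weighted_le a b n m q : 1 <= a -> 0 <= b -> a ^ n * b <= 1 ->
  (m <= (n + 1) * q)%nat -> a ^ m * b ^ q <= a ^ q.
Proof.
  intros Ha Hb Hnb Hm.
  apply Rle_trans with (a ^ ((n + 1) * q) * b ^ q).
  - apply Rmult_le_compat_r; [apply pow_le; exact Hb | apply Rle_pow; assumption].
  - rewrite pow_mult, pow_add, pow_1, !Rpow_mult_distr.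
    replace ((a ^ n) ^ q * a ^ q * b ^ q) with ((a ^ n * b) ^ q * a ^ q)
      by (rewrite Rpow_mult_distr; ring).
    rewrite <- (Rmult_1_l (a ^ q)) at 2.
    apply Rmult_le_compat_r; [apply pow_le; lra |].
    rewrite <- (pow1 q). apply pow_incr. split; [| exact Hnb].
    apply Rmult_le_pos; [apply pow_le; lra | exact Hb].
Qed.

Lemma freq_hypercyclic_lamB_bounded s l x : valid_space s -> 1 <= Cmod l ->
  freq_hypercyclic s (lamB l) x ->
  exists r M, forall m, Cmod l ^ m * Cmod (x m) ^ S r <= M.
Proof.
  intros Hv Hl [_ Hx].
  assert (Hne : exists u, unit_polydisc s u).
  { exists (seq_delta0 (RtoC 0)). split; [apply inX_seq_delta0 |].
    intros [| k]; simpl; rewrite Cmod_0; lra. }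
  destruct (pos_lower_density_linear_gaps _ (Hx _ (openX_unit_polydisc s Hv) Hne))
    as [q [N0 [Hq HN0]]].
  set (F := fun m => Cmod l ^ m * Cmod (x m) ^ q).
  destruct (finite_argmax F N0) as [m0 [_ Hm0]].
  destruct q as [| r]; [lia |].
  exists r, (Rmax (Cmod l ^ S r) (F m0)). intros m.
  destruct (Compare_dec.le_lt_dec N0 m) as [Hm | Hm].
  - destruct (HN0 m Hm) as [n [[_ Hn] [Hnm Hmn]]].
    specialize (Hn (m - n)%nat).
    rewrite Cmod_orbit_lamB in Hn. replace (n + (m - n))%nat with m in Hn by lia.
    eapply Rle_trans; [| apply Rmax_l].
    apply (pow_weighted_le _ _ n); [exact Hl | apply Cmod_ge_0 | lra | lia].
  - eapply Rle_trans; [apply (Hm0 m); lia | apply Rmax_r].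
Qed.

(* A non-unital algebra has no zeroth power: [seq_pow x r] is [x^(r+1)]. *)
Fixpoint seq_pow (x : seqC) (r : nat) : seqC :=
  match r with O => x | S r => seq_mul x (seq_pow x r) end.

Lemma Cmod_seq_pow x r j : Cmod (seq_pow x r j) = Cmod (x j) ^ S r.
Proof.
  induction r as [| r IH]; simpl; [ring |].
  unfold seq_mul. rewrite Cmod_mult, IH. simpl. ring.
Qed.

Lemma subalgebra_seq_pow s A x r : subalgebra s A -> A x -> A (seq_pow x r).
Proof.
  intros (_ & _ & _ & _ & Hmul) Hx. induction r; simpl; auto.
Qed.

Lemma no_freq_hypercyclic_in_hc_algebra s l A x :
  valid_space s -> 1 <= Cmod l -> hc_algebra s (lamB l) A ->
  A x -> ~ freq_hypercyclic s (lamB l) x.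
Proof.
  intros Hv Hl [HA [_ Hhc]] Hx Hfx.
  destruct (freq_hypercyclic_lamB_bounded s l x Hv Hl Hfx) as [r [M HM]].
  assert (Hpow : seq_pow x r <> seq0).
  { intros Hzero.
    destruct (hypercyclic_lamB_unbounded s l x Hv
                (freq_hypercyclic_hypercyclic _ _ _ Hfx) 0) as [m Hm].
    assert (Hxm : 0 < Cmod (x m)).
    { destruct (Cmod_ge_0 (x m)) as [| Hxm]; [assumption |].
      rewrite <- Hxm, Rmult_0_r in Hm. lra. }
    pose proof (Cmod_seq_pow x r m) as Hm'. rewrite Hzero in Hm'.
    unfold seq0 in Hm'. rewrite Cmod_0 in Hm'. pose proof (pow_lt _ (S r) Hxm). lra. }
  destruct (hypercyclic_lamB_unbounded s l _ Hv
              (Hhc _ (subalgebra_seq_pow s A x r HA Hx) Hpow) M) as [m Hm].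
  rewrite Cmod_seq_pow in Hm. specialize (HM m). lra.
Qed.

Theorem corollary1p3 (s : space) (l : C) :
  valid_space s -> 1 < Cmod l ->
  (~ exists A, fhc_algebra s (lamB l) A) /\
  (forall A, hc_algebra s (lamB l) A ->
     ~ exists x, A x /\ freq_hypercyclic s (lamB l) x).
Proof.
  intros Hv Hl. split.
  - intros [A [HA [[a [Ha Ha0]] Hfhc]]].
    assert (Hhc : hc_algebra s (lamB l) A).
    { split; [exact HA | split; [exists a; auto |]].
      intros b Hb Hb0. apply freq_hypercyclic_hypercyclic, Hfhc; assumption. }
    apply (no_freq_hypercyclic_in_hc_algebra s l A a Hv ltac:(lra) Hhc Ha).
    apply Hfhc; assumption.
  - intros A HA [x [Hx Hfx]].
    exact (no_freq_hypercyclic_in_hc_algebra s l A x Hv ltac:(lra) HA Hx Hfx).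
Qed.
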